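(* Let $0<\alpha<1/2$ and let $A_I=\{(x,y)\in[0,1]^2: S(x,y)\ge 2\alpha^2\}$. For every $(x,y)\in[0,1]^2\setminus\{(0,0)\}$ there exists $N\ge 0$ such that $G_\alpha^n(x,y)\in A_I$ for all $n\ge N$. Consequently every $G_\alpha$-invariant Borel probability measure $\mu$ on $[0,1]^2$ with $\mu(\{(0,0)\})=0$ satisfies $\mu(A_I)=1$.
   Context: Let $\tau:[0,1]\to[0,1]$ be the symmetric tent map, $\tau(x)=2x$ for $0\le x<1/2$ and $\tau(x)=2-2x$ for $1/2\le x\le 1$. For $0<\alpha<1$ define $G_\alpha:[0,1]^2\to[0,1]^2$ by $G_\alpha(x,y)=(y,\tau(\alpha y+(1-\alpha)x))$. Let $S(x,y)=\alpha y+(1-\alpha)x$. *)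

From Stdlib Require Import Reals Lra.
Open Scope R_scope.

Definition tau (x : R) : R := if Rlt_dec x (1/2) then 2 * x else 2 - 2 * x.

Definition S (alpha : R) (p : R * R) : R := alpha * snd p + (1 - alpha) * fst p.

Definition G (alpha : R) (p : R * R) : R * R := (snd p, tau (S alpha p)).

Definition square (p : R * R) : Prop :=
  0 <= fst p <= 1 /\ 0 <= snd p <= 1.

Definition A_I (alpha : R) (p : R * R) : Prop :=
  square p /\ S alpha p >= 2 * alpha ^ 2.

(* open subsets of R^2 (product / max-norm topology = Euclidean topology) *)
Definition open2 (U : R * R -> Prop) : Prop :=
  forall p, U p -> exists eps, 0 < eps /\
    forall q, Rabs (fst q - fst p) < eps -> Rabs (snd q - snd p) < eps -> U q.

Inductive borel : (R * R -> Prop) -> Prop :=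
| borel_open : forall U, open2 U -> borel U
| borel_compl : forall B, borel B -> borel (fun p => ~ B p)
| borel_union : forall F : nat -> (R * R -> Prop),
    (forall n, borel (F n)) -> borel (fun p => exists n, F n p).

(* A Borel probability measure on [0,1]^2, represented as a Borel probability
   measure on R^2 giving full mass to [0,1]^2 (values on non-Borel sets are
   irrelevant). *)
Record borel_prob_on_square (mu : (R * R -> Prop) -> R) : Prop := {
  bp_nonneg : forall B, borel B -> 0 <= mu B;
  bp_sigma_additive : forall F : nat -> (R * R -> Prop),
    (forall n, borel (F n)) ->
    (forall m n p, m <> n -> F m p -> F n p -> False) ->
    infinite_sum (fun n => mu (F n)) (mu (fun p => exists n, F n p));
  bp_total : mu (fun _ => True) = 1;
  bp_square : mu square = 1
}.

(* G_alpha-invariance: mu (G_alpha^{-1} B) = mu B for Borel B, the preimage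
   being taken inside [0,1]^2 *)
Definition G_invariant (alpha : R) (mu : (R * R -> Prop) -> R) : Prop :=
  forall B, borel B -> mu (fun p => square p /\ B (G alpha p)) = mu B.

From Stdlib Require Import Reals.
From Stdlib Require Import Lia Lra Psatz Classical FunctionalExtensionality PropExtensionality.
Open Scope R_scope.

(* The region [trap] of A_I is forward invariant, and every orbit enters it
   as soon as some iterate lies on the folding branch S >= 1/2 of tau.  On the
   linear branch S < 1/2 the coordinate sum x + y grows by the factor
   [growth] = 1 + 2a(1 - 2a) > 1, and it is at most 2 on the square, so only
   the origin stays on the linear branch forever.
   For the measure, let E_k be the set of points of the square outside [trap]
   and off the origin whose coordinate sum can still be multiplied k times by
   [growth] without exceeding 2.  The preimage of E_k lies in E_(k+1), which is
   contained in E_k, so invariance gives mu(E_k) = mu(E_(k+1)); the shells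
   E_k \ E_(k+1) are then disjoint null sets whose union is E_0, the square
   minus [trap] and the origin. *)

Lemma first_failure (P : nat -> Prop) (m : nat) :
  P 0%nat -> ~ P m -> exists n, P n /\ ~ P (Datatypes.S n).
Proof.
  intros P0; induction m as [|m IH]; intros Pm; [contradiction|].
  destruct (classic (P m)) as [Hm|Hm]; eauto.
Qed.

Lemma set_ext (A B : R * R -> Prop) : (forall p, A p <-> B p) -> A = B.
Proof.
  intros H; apply functional_extensionality; intros p.
  apply propositional_extensionality; auto.
Qed.

Lemma measure_ext (mu : (R * R -> Prop) -> R) (A B : R * R -> Prop) :
  (forall p, A p <-> B p) -> mu A = mu B.
Proof. intros H; now rewrite (set_ext A B H). Qed.

(** * Borel sets *)

Lemma borel_ext (A B : R * R -> Prop) :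
  borel A -> (forall p, A p <-> B p) -> borel B.
Proof. intros HA H; now rewrite <- (set_ext A B H). Qed.

Lemma borel_or (A B : R * R -> Prop) :
  borel A -> borel B -> borel (fun p => A p \/ B p).
Proof.
  intros HA HB.
  apply borel_ext with (fun p => exists n, (match n with O => A | _ => B end) p).
  - apply borel_union; intros [|n]; auto.
  - intros p; split.
    + intros [[|n] H]; auto.
    + intros [H|H]; [exists 0%nat | exists 1%nat]; auto.
Qed.

Lemma borel_and (A B : R * R -> Prop) :
  borel A -> borel B -> borel (fun p => A p /\ B p).
Proof.
  intros HA HB.
  apply borel_ext with (fun p => ~ (~ A p \/ ~ B p)).
  - apply borel_compl, borel_or; now apply borel_compl.
  - intros p; destruct (classic (A p)), (classic (B p)); tauto.
Qed.

Definition affine_map (a1 b1 c1 a2 b2 c2 : R) (p : R * R) : R * R :=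
  (a1 * fst p + b1 * snd p + c1, a2 * fst p + b2 * snd p + c2).

Lemma Rabs_lin_comb_le (a b dx dy d : R) : Rabs dx < d -> Rabs dy < d ->
  Rabs (a * dx + b * dy) <= (Rabs a + Rabs b) * d.
Proof.
  intros Hx Hy; eapply Rle_trans; [apply Rabs_triang|].
  rewrite !Rabs_mult; pose proof (Rabs_pos a); pose proof (Rabs_pos b); nra.
Qed.

Lemma open2_affine_preimage (U : R * R -> Prop) (a1 b1 c1 a2 b2 c2 : R) :
  open2 U -> open2 (fun p => U (affine_map a1 b1 c1 a2 b2 c2 p)).
Proof.
  intros HU p Hp; destruct (HU _ Hp) as [eps [Heps Hball]].
  set (M := Rabs a1 + Rabs b1 + Rabs a2 + Rabs b2 + 1).
  assert (HM : 0 < M).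
  { unfold M; pose proof (Rabs_pos a1); pose proof (Rabs_pos b1);
      pose proof (Rabs_pos a2); pose proof (Rabs_pos b2); lra. }
  exists (eps / M); split; [now apply Rdiv_lt_0_compat|].
  intros q Hx Hy.
  assert (Hlin : forall a b, Rabs a + Rabs b <= M - 1 ->
      Rabs (a * (fst q - fst p) + b * (snd q - snd p)) < eps).
  { intros a b Hab; eapply Rle_lt_trans; [apply Rabs_lin_comb_le; eassumption|].
    assert (eps = M * (eps / M)) by (field; lra).
    assert (0 < eps / M) by now apply Rdiv_lt_0_compat.
    pose proof (Rabs_pos a); pose proof (Rabs_pos b); nra. }
  apply Hball; unfold affine_map; simpl.
  - replace (_ - _) with (a1 * (fst q - fst p) + b1 * (snd q - snd p)) by ring.
    apply Hlin; unfold M; pose proof (Rabs_pos a2); pose proof (Rabs_pos b2); lra.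
  - replace (_ - _) with (a2 * (fst q - fst p) + b2 * (snd q - snd p)) by ring.
    apply Hlin; unfold M; pose proof (Rabs_pos a1); pose proof (Rabs_pos b1); lra.
Qed.

Lemma borel_affine_preimage (B : R * R -> Prop) (a1 b1 c1 a2 b2 c2 : R) :
  borel B -> borel (fun p => B (affine_map a1 b1 c1 a2 b2 c2 p)).
Proof.
  induction 1 as [U HU | B _ IH | F _ IH].
  - now apply borel_open, open2_affine_preimage.
  - now apply borel_compl.
  - now apply (borel_union (fun n p => F n (affine_map a1 b1 c1 a2 b2 c2 p))).
Qed.

Lemma borel_affine_pos (a b c : R) : borel (fun p => 0 < a * fst p + b * snd p + c).
Proof.
  assert (Hpos : open2 (fun p => 0 < fst p)).
  { intros p Hp; exists (fst p); split; [easy|].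
    intros q Hq _; apply Rabs_def2 in Hq; lra. }
  apply borel_ext with (fun p => 0 < fst (affine_map a b c 0 0 0 p)).
  - now apply (borel_affine_preimage (fun p => 0 < fst p)), borel_open.
  - easy.
Qed.

Lemma borel_affine_nonneg (a b c : R) :
  borel (fun p => 0 <= a * fst p + b * snd p + c).
Proof.
  eapply borel_ext; [apply borel_compl, (borel_affine_pos (- a) (- b) (- c))|].
  intros p; split; intros; lra.
Qed.

Lemma borel_empty : borel (fun _ => False).
Proof.
  eapply borel_ext; [apply (borel_affine_pos 0 0 0)|].
  intros p; split; intros; lra.
Qed.

Lemma borel_square : borel square.
Proof.
  eapply borel_ext.
  - apply borel_and; apply borel_and;
      [apply (borel_affine_nonneg 1 0 0) | apply (borel_affine_nonneg (-1) 0 1)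
      |apply (borel_affine_nonneg 0 1 0) | apply (borel_affine_nonneg 0 (-1) 1)].
  - intros [x y]; unfold square; simpl; split; intros; lra.
Qed.

Lemma borel_origin : borel (fun p => p = (0, 0)).
Proof.
  eapply borel_ext.
  - apply borel_and; apply borel_and;
      [apply (borel_affine_nonneg 1 0 0) | apply (borel_affine_nonneg (-1) 0 0)
      |apply (borel_affine_nonneg 0 1 0) | apply (borel_affine_nonneg 0 (-1) 0)].
  - intros [x y]; simpl; split.
    + intros [[? ?] [? ?]]; f_equal; lra.
    + intros [= -> ->]; lra.
Qed.

(** * Probability measures on the square *)

Section Measure.
Variable mu : (R * R -> Prop) -> R.
Hypothesis Hmu : borel_prob_on_square mu.

Lemma measure_empty : mu (fun _ => False) = 0.
Proof.
  pose proof (bp_sigma_additive _ Hmu (fun _ _ => False) (fun _ => borel_empty)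
    (fun m n p _ H _ => H)) as Hsum; cbv beta in Hsum.
  rewrite (measure_ext mu (fun p => exists n : nat, False) (fun _ => False)) in Hsum
    by (intros p; split; [intros [_ []] | intros []]).
  set (c := mu (fun _ => False)) in *.
  assert (Hc : 0 <= c) by apply (bp_nonneg _ Hmu _ borel_empty).
  destruct (Req_dec c 0) as [|Hne]; [easy|].
  (* partial sums are c (n + 1), which cannot converge to c > 0 *)
  destruct (Hsum c ltac:(lra)) as [N HN].
  specialize (HN (Datatypes.S N) ltac:(lia)).
  rewrite sum_cte in HN; unfold Rdist in HN; rewrite !S_INR in HN.
  pose proof (pos_INR N); rewrite Rabs_right in HN by nra; nra.
Qed.

Lemma measure_union2 (A B : R * R -> Prop) :
  borel A -> borel B -> (forall p, A p -> B p -> False) ->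
  mu (fun p => A p \/ B p) = mu A + mu B.
Proof.
  intros HA HB Hdisj.
  set (F := fun n => match n with 0%nat => A | 1%nat => B | _ => fun _ => False end).
  assert (HF : forall n, borel (F n)) by (intros [|[|n]]; simpl; auto using borel_empty).
  assert (HFdisj : forall m n p, m <> n -> F m p -> F n p -> False).
  { intros [|[|m]] [|[|n]] p Hmn; simpl; try tauto; try lia; eauto. }
  pose proof (bp_sigma_additive _ Hmu F HF HFdisj) as Hsum; cbv beta in Hsum.
  rewrite (measure_ext mu (fun p => exists n, F n p) (fun p => A p \/ B p)) in Hsum.
  2:{ intros p; split.
      - intros [[|[|n]] H]; simpl in H; tauto.
      - intros [H|H]; [exists 0%nat | exists 1%nat]; auto. }
  apply (uniqueness_sum _ _ _ Hsum).
  intros eps Heps; exists 1%nat; intros n Hn.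
  replace (sum_f_R0 (fun n => mu (F n)) n) with (mu A + mu B).
  { unfold Rdist; rewrite Rminus_diag, Rabs_R0; lra. }
  destruct n as [|n]; [lia|]; clear Hn; induction n as [|n IH]; [easy|].
  simpl in *; rewrite <- IH, measure_empty; ring.
Qed.

Lemma measure_mono (A B : R * R -> Prop) :
  borel A -> borel B -> (forall p, A p -> B p) -> mu A <= mu B.
Proof.
  intros HA HB HAB.
  assert (HBA : borel (fun p => B p /\ ~ A p)) by now apply borel_and, borel_compl.
  rewrite (measure_ext mu B (fun p => A p \/ (B p /\ ~ A p))).
  - rewrite measure_union2; [|easy|easy|tauto].
    pose proof (bp_nonneg _ Hmu _ HBA); lra.
  - intros p; destruct (classic (A p)); intuition.
Qed.

Lemma measure_le_1 (A : R * R -> Prop) : borel A -> mu A <= 1.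
Proof.
  intros HA; rewrite <- (bp_total _ Hmu).
  apply measure_mono; auto.
  apply borel_ext with (fun p => ~ False); [apply borel_compl, borel_empty|tauto].
Qed.

Lemma measure_diff_null (A B : R * R -> Prop) :
  borel A -> borel B -> (forall p, B p -> A p) -> mu A = mu B ->
  mu (fun p => A p /\ ~ B p) = 0.
Proof.
  intros HA HB HBA Heq.
  rewrite (measure_ext mu A (fun p => B p \/ (A p /\ ~ B p))) in Heq.
  - rewrite measure_union2 in Heq; [lra|easy| |tauto].
    now apply borel_and, borel_compl.
  - intros p; destruct (classic (B p)); intuition.
Qed.

Lemma measure_union_null (F : nat -> R * R -> Prop) :
  (forall n, borel (F n)) ->
  (forall m n p, m <> n -> F m p -> F n p -> False) ->
  (forall n, mu (F n) = 0) ->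
  mu (fun p => exists n, F n p) = 0.
Proof.
  intros HF Hdisj Hnull.
  apply (uniqueness_sum (fun n => mu (F n))); [now apply bp_sigma_additive|].
  intros eps Heps; exists 0%nat; intros n _.
  rewrite (sum_eq _ (fun _ => 0)) by auto.
  rewrite sum_cte; unfold Rdist; rewrite Rmult_0_l, Rminus_diag, Rabs_R0; lra.
Qed.

End Measure.

(** * The dynamics of G *)

Lemma tau_lt (s : R) : s < 1/2 -> tau s = 2 * s.
Proof. unfold tau; destruct (Rlt_dec s (1/2)); lra. Qed.

Lemma tau_ge (s : R) : s >= 1/2 -> tau s = 2 - 2 * s.
Proof. unfold tau; destruct (Rlt_dec s (1/2)); lra. Qed.

Definition coord_sum (p : R * R) : R := fst p + snd p.

(* On the linear branch S(G p) = 2 a S(p) + (1 - a) y, so the first disjunct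
   says that G p is again in A_I; the second one selects the folding branch. *)
Definition trap (alpha : R) (p : R * R) : Prop :=
  square p /\ S alpha p >= 2 * alpha ^ 2 /\
  (2 * alpha * S alpha p + (1 - alpha) * snd p >= 2 * alpha ^ 2 \/ S alpha p >= 1/2).

Definition growth (alpha : R) : R := 1 + 2 * alpha * (1 - 2 * alpha).

Definition escaping (alpha : R) (k : nat) (p : R * R) : Prop :=
  square p /\ ~ trap alpha p /\ 0 < coord_sum p /\
  growth alpha ^ k * coord_sum p <= 2.

Lemma coord_sum_le_2 (p : R * R) : square p -> coord_sum p <= 2.
Proof. destruct p; unfold square, coord_sum; simpl; lra. Qed.

Lemma coord_sum_pos (p : R * R) : square p -> p <> (0, 0) -> 0 < coord_sum p.
Proof.
  destruct p as [x y]; unfold square, coord_sum; simpl; intros Hsq Hne.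
  destruct (Req_dec x 0), (Req_dec y 0); subst; [congruence|lra..].
Qed.

Section Dynamics.
Variable alpha : R.
Hypothesis Ha : 0 < alpha < 1/2.

Lemma G_linear_branch (p : R * R) : S alpha p < 1/2 ->
  G alpha p = affine_map 0 1 0 (2 * (1 - alpha)) (2 * alpha) 0 p.
Proof.
  intros Hs; unfold G; rewrite tau_lt by easy.
  unfold affine_map, S; f_equal; ring.
Qed.

Lemma G_folding_branch (p : R * R) : S alpha p >= 1/2 ->
  G alpha p = affine_map 0 1 0 (- 2 * (1 - alpha)) (- 2 * alpha) 2 p.
Proof.
  intros Hs; unfold G; rewrite tau_ge by easy.
  unfold affine_map, S; f_equal; ring.
Qed.

Lemma G_square (p : R * R) : square p -> square (G alpha p).
Proof.
  intros Hsq; assert (0 <= S alpha p <= 1).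
  { destruct p as [x y]; unfold square, S in *; simpl in *; nra. }
  unfold G; split; [apply Hsq|simpl].
  destruct (Rlt_dec (S alpha p) (1/2)).
  - rewrite tau_lt; lra.
  - rewrite tau_ge; lra.
Qed.

Lemma iter_G_square (n : nat) (p : R * R) :
  square p -> square (Nat.iter n (G alpha) p).
Proof. intros Hsq; induction n; simpl; auto using G_square. Qed.

Lemma trap_G_folding (p : R * R) :
  square p -> S alpha p >= 1/2 -> trap alpha (G alpha p).
Proof.
  intros Hsq Hs; split; [now apply G_square|].
  rewrite (G_folding_branch p Hs).
  destruct p as [x y]; unfold square, affine_map, S in *; simpl in *.
  destruct Hsq as [Hx Hy].
  (* uses 1 - a - 2a^2 = (1 - 2a)(1 + a) >= 0 *)
  assert (0 <= alpha * ((1 - alpha) * (1 - x))) by (repeat apply Rmult_le_pos; lra).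
  assert (0 <= y * ((1 - 2 * alpha) * (1 + alpha))) by (repeat apply Rmult_le_pos; lra).
  assert (0 <= alpha ^ 3 * (1 - y)) by (apply Rmult_le_pos; [apply pow_le|]; lra).
  assert (0 <= (1 - alpha) * (1 - x) * (2 * alpha ^ 2 + 1 - alpha)) by
    (repeat apply Rmult_le_pos; nra).
  assert (0 <= alpha * (1 - 2 * alpha)) by nra.
  split; [nra|left; nra].
Qed.

Lemma trap_G (p : R * R) : trap alpha p -> trap alpha (G alpha p).
Proof.
  intros Htrap; destruct (Rlt_dec (S alpha p) (1/2)) as [Hs|Hs].
  2: apply trap_G_folding; [apply Htrap|lra].
  destruct Htrap as [Hsq [HS [Hlin|]]]; [|lra].
  split; [now apply G_square|].
  rewrite (G_linear_branch p Hs).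
  destruct p as [x y]; unfold square, affine_map, S in *; simpl in *.
  split; [nra|left; nra].
Qed.

Lemma trap_A_I (p : R * R) : trap alpha p -> A_I alpha p.
Proof. intros [Hsq [HS _]]; now split. Qed.

Lemma not_trap_origin : ~ trap alpha (0, 0).
Proof. intros [_ [HS _]]; unfold S in HS; simpl in HS; nra. Qed.

Lemma growth_gt_1 : 1 < growth alpha.
Proof. unfold growth; nra. Qed.

Lemma growth_pow_unbounded (v : R) : 0 < v -> exists n, 2 < growth alpha ^ n * v.
Proof.
  intros Hv; pose proof growth_gt_1.
  destruct (Pow_x_infinity (growth alpha) ltac:(rewrite Rabs_right; lra) (3 / v))
    as [n Hn].
  exists n; specialize (Hn n (le_n n)).
  rewrite Rabs_right in Hn by (apply Rle_ge, pow_le; lra).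
  apply Rge_le, (Rmult_le_compat_r v) in Hn; [|lra].
  replace (3 / v * v) with 3 in Hn by (field; lra); lra.
Qed.

Lemma coord_sum_G_linear (p : R * R) : square p -> S alpha p < 1/2 ->
  growth alpha * coord_sum p <= coord_sum (G alpha p).
Proof.
  intros Hsq Hs; rewrite (G_linear_branch p Hs).
  destruct p as [x y]; unfold square, coord_sum, growth, affine_map, S in *; simpl in *.
  assert (0 <= alpha * alpha * y) by (repeat apply Rmult_le_pos; lra).
  assert (0 <= (1 - 2 * alpha) * (1 - 2 * alpha) * x) by (repeat apply Rmult_le_pos; lra).
  nra.
Qed.

Lemma coord_sum_iter_linear (n : nat) (p : R * R) : square p ->
  (forall k, (k < n)%nat -> S alpha (Nat.iter k (G alpha) p) < 1/2) ->
  growth alpha ^ n * coord_sum p <= coord_sum (Nat.iter n (G alpha) p).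
Proof.
  intros Hsq; induction n as [|n IH]; intros Hlin; simpl; [lra|].
  pose proof growth_gt_1.
  rewrite Rmult_assoc; eapply Rle_trans.
  - apply Rmult_le_compat_l; [lra|]; apply IH; auto.
  - apply coord_sum_G_linear; auto using iter_G_square.
Qed.

Lemma exists_iter_folding (p : R * R) : square p -> p <> (0, 0) ->
  exists n, S alpha (Nat.iter n (G alpha) p) >= 1/2.
Proof.
  intros Hsq Hne; apply NNPP; intros Hnone.
  destruct (growth_pow_unbounded (coord_sum p) (coord_sum_pos p Hsq Hne)) as [n Hn].
  assert (Hle : growth alpha ^ n * coord_sum p <= coord_sum (Nat.iter n (G alpha) p)).
  { apply coord_sum_iter_linear; auto.
    intros k _; apply Rnot_ge_lt; eauto. }
  pose proof (coord_sum_le_2 _ (iter_G_square n p Hsq)); lra.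
Qed.

Lemma eventually_A_I (p : R * R) : square p -> p <> (0, 0) ->
  exists N, forall n, (N <= n)%nat -> A_I alpha (Nat.iter n (G alpha) p).
Proof.
  intros Hsq Hne; destruct (exists_iter_folding p Hsq Hne) as [N HN].
  exists (Datatypes.S N); intros n Hn.
  replace n with (n - Datatypes.S N + Datatypes.S N)%nat by lia.
  apply trap_A_I; induction (n - Datatypes.S N)%nat as [|k IH]; simpl.
  - apply trap_G_folding; auto using iter_G_square.
  - now apply trap_G.
Qed.

(** * Invariant measures *)

Lemma borel_trap : borel (trap alpha).
Proof.
  eapply borel_ext.
  - apply borel_and; [apply borel_square|]; apply borel_and;
      [|apply borel_or];
      [apply (borel_affine_nonneg (1 - alpha) alpha (- (2 * alpha ^ 2)))
      |apply (borel_affine_nonneg (2 * alpha * (1 - alpha)) (2 * alpha ^ 2 + 1 - alpha)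
          (- (2 * alpha ^ 2)))
      |apply (borel_affine_nonneg (1 - alpha) alpha (- (1/2)))].
  - intros [x y]; unfold trap, S; simpl.
    split; intros [Hsq [H1 [H2|H2]]]; (split; [easy|split; [lra|]]); lra.
Qed.

Lemma borel_A_I : borel (A_I alpha).
Proof.
  eapply borel_ext.
  - apply borel_and; [apply borel_square|].
    apply (borel_affine_nonneg (1 - alpha) alpha (- (2 * alpha ^ 2))).
  - intros [x y]; unfold A_I, S; simpl; split; intros [Hsq H]; split; auto; lra.
Qed.

Lemma borel_escaping (k : nat) : borel (escaping alpha k).
Proof.
  apply borel_and; [apply borel_square|].
  apply borel_and; [apply borel_compl, borel_trap|].
  apply borel_and.
  - eapply borel_ext; [apply (borel_affine_pos 1 1 0)|].
    intros p; unfold coord_sum; split; intros; lra.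
  - eapply borel_ext; [apply (borel_affine_nonneg (- growth alpha ^ k) (- growth alpha ^ k) 2)|].
    intros p; unfold coord_sum; split; intros; lra.
Qed.

Lemma borel_G_preimage (B : R * R -> Prop) :
  borel B -> borel (fun p => square p /\ B (G alpha p)).
Proof.
  intros HB.
  apply borel_ext with (fun p =>
    (square p /\ 0 < - (1 - alpha) * fst p + - alpha * snd p + 1/2) /\
      B (affine_map 0 1 0 (2 * (1 - alpha)) (2 * alpha) 0 p) \/
    (square p /\ 0 <= (1 - alpha) * fst p + alpha * snd p + - (1/2)) /\
      B (affine_map 0 1 0 (- 2 * (1 - alpha)) (- 2 * alpha) 2 p)).
  - apply borel_or; (apply borel_and; [apply borel_and; [apply borel_square|]|]);
      auto using borel_affine_pos, borel_affine_nonneg, borel_affine_preimage.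
  - intros p; destruct (Rlt_dec (S alpha p) (1/2)) as [Hs|Hs].
    + rewrite (G_linear_branch p Hs); unfold S in Hs; split.
      * intros [[[? ?] ?]|[[? ?] ?]]; [easy|lra].
      * intros [? ?]; left; split; [split; [easy|lra]|easy].
    + apply Rnot_lt_ge in Hs; rewrite (G_folding_branch p Hs); unfold S in Hs; split.
      * intros [[[? ?] ?]|[[? ?] ?]]; [lra|easy].
      * intros [? ?]; right; split; [split; [easy|lra]|easy].
Qed.

Lemma escaping_succ (k : nat) (p : R * R) :
  escaping alpha (Datatypes.S k) p -> escaping alpha k p.
Proof.
  intros [Hsq [Htrap [Hpos Hle]]]; split; [easy|split; [easy|split; [easy|]]].
  pose proof growth_gt_1; pose proof (pow_le (growth alpha) k ltac:(lra)).
  simpl in Hle; nra.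
Qed.

Lemma escaping_G_preimage (k : nat) (p : R * R) : square p ->
  escaping alpha k (G alpha p) -> escaping alpha (Datatypes.S k) p.
Proof.
  intros Hsq [_ [Htrap [Hpos Hle]]].
  assert (Hs : S alpha p < 1/2).
  { apply Rnot_ge_lt; intros Hs; now apply Htrap, trap_G_folding. }
  pose proof (coord_sum_G_linear p Hsq Hs) as Hgrow.
  pose proof growth_gt_1; pose proof (pow_le (growth alpha) k ltac:(lra)).
  split; [easy|split; [|split]].
  - intros Hp; now apply Htrap, trap_G.
  - rewrite (G_linear_branch p Hs) in Hpos.
    destruct p as [x y]; unfold square, coord_sum, affine_map in *; simpl in *; nra.
  - simpl; rewrite Rmult_assoc, (Rmult_comm (growth alpha)), Rmult_assoc; nra.
Qed.

Section Invariant.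
Variable mu : (R * R -> Prop) -> R.
Hypothesis Hmu : borel_prob_on_square mu.
Hypothesis Hinv : G_invariant alpha mu.

Lemma measure_escaping_succ (k : nat) :
  mu (escaping alpha k) = mu (escaping alpha (Datatypes.S k)).
Proof.
  apply Rle_antisym.
  - rewrite <- (Hinv _ (borel_escaping k)).
    apply measure_mono; auto using borel_G_preimage, borel_escaping.
    intros p [Hsq Hp]; now apply escaping_G_preimage.
  - apply measure_mono; auto using borel_escaping, escaping_succ.
Qed.

Lemma measure_escaping_0 : mu (escaping alpha 0) = 0.
Proof.
  set (shell := fun n p => escaping alpha n p /\ ~ escaping alpha (Datatypes.S n) p).
  assert (Hmono : forall m n p, (m <= n)%nat -> escaping alpha n p -> escaping alpha m p).
  { intros m n p Hmn; induction Hmn; auto using escaping_succ. }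
  rewrite (measure_ext mu _ (fun p => exists n, shell n p)).
  - apply measure_union_null; auto.
    + intros n; apply borel_and; auto using borel_compl, borel_escaping.
    + intros m n p Hmn [Hm Hm'] [Hn Hn'].
      destruct (Nat.lt_gt_cases m n) as [[Hlt|Hlt] _]; auto;
        [apply Hm' | apply Hn']; eapply Hmono; eauto.
    + intros n; apply measure_diff_null; auto using borel_escaping, escaping_succ,
        measure_escaping_succ.
  - intros p; split.
    + intros Hp; destruct (growth_pow_unbounded (coord_sum p)) as [m Hm];
        [apply Hp|].
      apply (first_failure (fun n => escaping alpha n p) m); [easy|].
      intros [_ [_ [_ Hle]]]; lra.
    + intros [n [Hn _]]; apply (Hmono 0%nat n); [lia|easy].
Qed.

Lemma measure_trap (Horigin : mu (fun p => p = (0, 0)) = 0) : mu (trap alpha) = 1.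
Proof.
  rewrite <- (bp_square _ Hmu).
  rewrite (measure_ext mu square
    (fun p => trap alpha p \/ (escaping alpha 0 p \/ p = (0, 0)))).
  - rewrite !measure_union2; auto using borel_trap, borel_origin, borel_or, borel_escaping.
    + rewrite measure_escaping_0, Horigin; ring.
    + intros p [_ [_ [Hpos _]]] ->; unfold coord_sum in Hpos; simpl in Hpos; lra.
    + intros p Hp [[_ [Hnot _]]| ->]; [easy|now apply not_trap_origin].
  - intros p; split.
    + intros Hsq; destruct (classic (trap alpha p)) as [|Hnot]; [now left|right].
      destruct (classic (p = (0, 0))) as [|Hne]; [now right|left].
      split; [easy|split; [easy|split; [now apply coord_sum_pos|]]].
      simpl; pose proof (coord_sum_le_2 p Hsq); lra.
    + intros [[Hsq _]|[[Hsq _]| ->]]; auto; unfold square; simpl; lra.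
Qed.

End Invariant.
End Dynamics.

Theorem proposition5 (alpha : R) (Ha : 0 < alpha < 1/2) :
  (forall p : R * R, square p -> p <> (0, 0) ->
     exists N : nat, forall n : nat, (N <= n)%nat ->
       A_I alpha (Nat.iter n (G alpha) p))
  /\
  (forall mu : (R * R -> Prop) -> R,
     borel_prob_on_square mu -> G_invariant alpha mu ->
     mu (fun p => p = (0, 0)) = 0 ->
     mu (A_I alpha) = 1).
Proof.
  split.
  - exact (eventually_A_I alpha Ha).
  - intros mu Hmu Hinv Horigin; apply Rle_antisym.
    + exact (measure_le_1 mu Hmu _ (borel_A_I alpha)).
    + rewrite <- (measure_trap alpha Ha mu Hmu Hinv Horigin).
      apply measure_mono; auto using borel_trap, borel_A_I, trap_A_I.
Qed.
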